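(* Let $K$ be a field of characteristic $0$, let $W\le S_d$ and $V\le S_r$ be permutation groups and let $\chi$, $\theta$ be one-dimensional characters of $W$, $V$ respectively. Regard $W\times V\le S_d\times S_r\le S_{d+r}$, where $(\sigma,\tau)$ is the permutation $s\mapsto\sigma(s)$ for $1\le s\le d$ and $d+t\mapsto d+\tau(t)$ for $1\le t\le r$, and let $\lambda=\chi\otimes\theta$ be the one-dimensional character $(\sigma,\tau)\mapsto\chi(\sigma)\theta(\tau)$ of $W\times V$. Then: (i) for every $K$-linear space $E$, the rule $(y_1\chi\cdots\chi y_d)\otimes(z_1\theta\cdots\theta z_r)\mapsto y_1\lambda\cdots\lambda y_d\lambda z_1\lambda\cdots\lambda z_r$ ($y_s,z_t\in E$) gives a well-defined linear isomorphism $\Pi_E\colon[\chi]^d(E)\otimes[\theta]^r(E)\to[\lambda]^{d+r}(E)$; (ii) the family $\Pi=(\Pi_E)$, $E$ running over finite-dimensional $K$-linear spaces, is a natural isomorphism of functors $[\chi]^d(-)\otimes[\theta]^r(-)\to[\lambda]^{d+r}(-)$; (iii) $g(\chi\otimes\theta;x_0,x_1,x_2,\dots)=Z(\chi;p_1,\dots,p_d)\,Z(\theta;p_1,\dots,p_r)$, where $p_s$ are the power sums in $x_0,x_1,x_2,\dots$.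
   Context: A one-dimensional character of a group $G$ is a homomorphism $G\to K^\times$. For $U\le S_m$ with one-dimensional character $\psi$ and a $K$-linear space $E$: $U$ acts on $\otimes^mE$ by $\sigma(x_1\otimes\cdots\otimes x_m)=x_{\sigma^{-1}(1)}\otimes\cdots\otimes x_{\sigma^{-1}(m)}$; ${}_\psi(\otimes^mE)$ is the subspace spanned by all $\psi^{-1}(\sigma)z-\sigma z$; the semi-symmetric power is $[\psi]^m(E)=\otimes^mE/{}_\psi(\otimes^mE)$, with $x_1\psi\cdots\psi x_m$ the image of $x_1\otimes\cdots\otimes x_m$; for a linear map $l$, $[\psi]^m(l)$ sends $x_1\psi\cdots\psi x_m\mapsto l(x_1)\psi\cdots\psi l(x_m)$, making $[\psi]^m(-)$ a functor. $U$ acts on $\mathbb N_0^m$ ($\mathbb N_0=\{0,1,2,\dots\}$) by $\sigma(i_1,\dots,i_m)=(i_{\sigma^{-1}(1)},\dots,i_{\sigma^{-1}(m)})$; $J(\mathbb N_0^m,\psi)$ is the set of $j\in\mathbb N_0^m$ lexicographically minimal in their $U$-orbit with $\psi(\sigma)=1$ for all $\sigma$ in the stabilizer $U_j$; $g(\psi;x_0,x_1,\dots)=\sum_{j\in J(\mathbb N_0^m,\psi)}x_{j_1}\cdots x_{j_m}$. $Z(\psi;p_1,\dots,p_m)=|U|^{-1}\sum_{\sigma\in U}\psi(\sigma)p_1^{c_1(\sigma)}\cdots p_m^{c_m(\sigma)}$, $c_s(\sigma)$ being the number of $s$-cycles of $\sigma$; $p_s=\sum_i x_i^s$. *)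

From HB Require Import structures.
From mathcomp Require Import all_boot all_order all_algebra all_fingroup.
From mathcomp Require Import generic_quotient ring_quotient.
From mathcomp Require Import monalg.
From mathcomp Require Import mpoly.
From Stdlib Require Import ClassicalEpsilon.
Set Implicit Arguments. Unset Strict Implicit. Unset Printing Implicit Defensive.
Import GRing.Theory.
Local Open Scope ring_scope.
Local Open Scope quotient_scope.
Import Quotient.

Section Span.
Variables (R : nzRingType) (V : lmodType R) (S : V -> Prop).

Definition in_span (v : V) : Prop :=
  exists s : seq (R * V), (forall p, p \in s -> S p.2) /\
    v = \sum_(p <- s) p.1 *: p.2.

Definition span_pred : {pred V} :=
  fun v => if excluded_middle_informative (in_span v) then true else false.

Lemma span_predP v : reflect (in_span v) (v \in span_pred).
Proof.
rewrite unfold_in /span_pred; case: excluded_middle_informative => h.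
  by constructor. by constructor.
Qed.

Lemma span_scale_seq (c : R) (s : seq (R * V)) :
  \sum_(p <- [seq ((c * q.1 : R), q.2) | q <- s]) p.1 *: (p.2 : V) =
  c *: \sum_(p <- s) p.1 *: (p.2 : V).
Proof. by rewrite big_map scaler_sumr; apply: eq_bigr => p _; rewrite scalerA. Qed.

Lemma span_zmod : zmod_closed span_pred.
Proof.
split; first by apply/span_predP; exists [::]; rewrite big_nil.
move=> u v /span_predP [s [Hs ->]] /span_predP [t [Ht ->]].
apply/span_predP; exists (s ++ [seq ((-1 * q.1 : R), q.2) | q <- t]); split.
  move=> p; rewrite mem_cat => /orP [/Hs //|/mapP [q /Ht Hq ->]] //.
by rewrite big_cat span_scale_seq scaleN1r.
Qed.

HB.instance Definition _ := GRing.isZmodClosed.Build V span_pred span_zmod.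

Lemma span_scale c v : v \in span_pred -> c *: v \in span_pred.
Proof.
move=> /span_predP [s [Hs ->]]; apply/span_predP.
exists [seq ((c * q.1 : R), q.2) | q <- s]; split; last by rewrite span_scale_seq.
by move=> p /mapP [q /Hs Hq ->].
Qed.

Lemma span_gen v : S v -> v \in span_pred.
Proof.
move=> Sv; apply/span_predP; exists [:: (1, v)]; split.
  by move=> p; rewrite inE => /eqP ->.
by rewrite big_seq1 scale1r.
Qed.

Local Notation Quot := (Quotient.quot span_pred).

Definition qscale (c : R) (x : Quot) : Quot := \pi_Quot (c *: repr x).

Lemma pi_scale c : {morph \pi_Quot : x / c *: x >-> qscale c x}.
Proof.
move=> x; rewrite /qscale; apply/eqP; rewrite -Quotient.idealrBE.
by rewrite -scalerBr span_scale // Quotient.idealrBE reprK.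
Qed.

Canonical pi_scale_morph c := PiMorph1 (pi_scale c).

Lemma qscaleA a b x : qscale a (qscale b x) = qscale (a * b) x.
Proof. by rewrite -[x]reprK !piE scalerA. Qed.
Lemma qscale1 : left_id 1 qscale.
Proof. by move=> x; rewrite -[x]reprK !piE scale1r. Qed.
Lemma qscaleDr : right_distributive qscale +%R.
Proof. by move=> a x y; rewrite -[x]reprK -[y]reprK !piE scalerDr. Qed.
Lemma qscaleDl x : {morph qscale^~ x : a b / a + b}.
Proof. by move=> a b; rewrite -[x]reprK !piE scalerDl. Qed.

HB.instance Definition _ := GRing.Zmodule_isLmodule.Build R Quot
  qscaleA qscale1 qscaleDr qscaleDl.
End Span.

Notation Quot S := (Quotient.quot (span_pred S)).

Section Constructions.
Variable K : fieldType.

(* The free K-module on a (choice) type X: finitely supported X -> K.   *)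
Notation Free X := (@monalg.malg X K).
Notation "[ 'b' x ]" := (monalg.mkmalgU x 1) (format "[ 'b'  x ]").

Definition free_lift (X Y : choiceType) (f : X -> Y) (g : Free X) : Free Y :=
  \sum_(k <- finmap.enum_fset (monalg.msupp g)) monalg.mkmalgU (f k) (monalg.mcoeff k g).

Definition upd (E : Type) m (x : {ffun 'I_m -> E}) (i : 'I_m) (e : E) :
  {ffun 'I_m -> E} := [ffun k => if k == i then e else x k].

Definition multilin_rel (E : lmodType K) (m : nat) :
    Free {ffun 'I_m -> E} -> Prop :=
  fun v => exists (x : {ffun 'I_m -> E}) (i : 'I_m) (a : K) (y z : E),
    v = [b upd x i (a *: y + z) ] - a *: [b upd x i y ] - [b upd x i z ].

Definition tpow (E : lmodType K) (m : nat) := Quot (@multilin_rel E m).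

Definition tens (E : lmodType K) m (x : {ffun 'I_m -> E}) : tpow E m :=
  \pi_(tpow E m) [b x ].

Definition perm_tuple (T : Type) m (s : 'S_m) (x : {ffun 'I_m -> T}) :
  {ffun 'I_m -> T} := [ffun k => x ((s^-1)%g k)].

Definition tact (E : lmodType K) m (s : 'S_m) (z : tpow E m) : tpow E m :=
  \pi_(tpow E m) (free_lift (@perm_tuple E m s) (repr z)).

Definition ssp_rel (E : lmodType K) m (U : {set 'S_m}) (psi : 'S_m -> K) :
    tpow E m -> Prop :=
  fun w => exists s, s \in U /\ exists z : tpow E m,
    w = (psi s)^-1 *: z - tact s z.

Definition ssp (E : lmodType K) m (U : {set 'S_m}) (psi : 'S_m -> K) :=
  Quot (@ssp_rel E m U psi).

Definition sspe (E : lmodType K) m (U : {set 'S_m}) (psi : 'S_m -> K)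
  (x : {ffun 'I_m -> E}) : ssp E U psi := \pi_(ssp E U psi) (tens x).

Definition bilin_rel (A B : lmodType K) : Free (A * B)%type -> Prop :=
  fun v =>
    (exists (a a' : A) (b : B) (c : K),
       v = [b (c *: a + a', b) ] - c *: [b (a, b) ] - [b (a', b) ]) \/
    (exists (a : A) (b b' : B) (c : K),
       v = [b (a, c *: b + b') ] - c *: [b (a, b) ] - [b (a, b') ]).

Definition tprod (A B : lmodType K) := Quot (@bilin_rel A B).

Definition tpe (A B : lmodType K) (a : A) (b : B) : tprod A B :=
  \pi_(tprod A B) [b (a, b) ].

Definition tpow_map (E F : lmodType K) m (l : E -> F) (z : tpow E m) : tpow F m :=
  \pi_(tpow F m) (free_lift (fun x : {ffun 'I_m -> E} => [ffun i => l (x i)])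
                            (repr z)).

Definition ssp_map (E F : lmodType K) m (U : {set 'S_m}) (psi : 'S_m -> K)
  (l : E -> F) (z : ssp E U psi) : ssp F U psi :=
  \pi_(ssp F U psi) (tpow_map l (repr z)).

Definition tprod_map (A A' B B' : lmodType K) (f : A -> A') (g : B -> B')
  (z : tprod A B) : tprod A' B' :=
  \pi_(tprod A' B') (free_lift (fun p : A * B => (f p.1, g p.2)) (repr z)).

Definition lin_char m (U : {set 'S_m}) (psi : 'S_m -> K) : Prop :=
  {in U &, forall s t, psi (s * t)%g = psi s * psi t} /\
  {in U, forall s, psi s != 0}.

End Constructions.

Section PairPerm.
Variables (d r : nat) (s : 'S_d) (t : 'S_r).

Definition pair_fun (s : 'S_d) (t : 'S_r) (i : 'I_(d + r)) : 'I_(d + r) :=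
  match split i with
  | inl a => lshift r (s a)
  | inr b => rshift d (t b)
  end.

Lemma pair_funK : cancel (pair_fun s t) (pair_fun s^-1 t^-1).
Proof.
move=> i; rewrite /pair_fun -{2}(splitK i); case: (split i) => [a|b] /=.
  by rewrite -[lshift r (s a)]/(unsplit (inl (s a) : 'I_d + 'I_r)) unsplitK permK.
by rewrite -[rshift d (t b)]/(unsplit (inr (t b) : 'I_d + 'I_r)) unsplitK permK.
Qed.

Definition pair_perm : 'S_(d + r) := perm (can_inj pair_funK).
End PairPerm.

Definition prod_perm_set d r (W : {set 'S_d}) (V : {set 'S_r}) :
  {set 'S_(d + r)} := [set pair_perm s t | s in W, t in V].

Definition concat_tuple (E : Type) d r (y : {ffun 'I_d -> E}) (z : {ffun 'I_r -> E}) :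
  {ffun 'I_(d + r) -> E} :=
  [ffun i => match split i with inl a => y a | inr b => z b end].

(* Generating functions, truncated to the variables x_0, ..., x_(N-1)
   (a formal power series in x_0, x_1, ... is determined by all its
   truncations).                                                       *)
Section GenFun.
Variables (K : fieldType).

Definition lexle m (j j' : 'I_m -> nat) : bool :=
  [forall k : 'I_m,
    ([forall i : 'I_m, (i < k)%N ==> (j i == j' i)] && (j k != j' k))
      ==> (j k < j' k)%N].

Definition idx_act m N (s : 'S_m) (j : {ffun 'I_m -> 'I_N}) : {ffun 'I_m -> 'I_N} :=
  [ffun k => j ((s^-1)%g k)].

Definition Jset m N (U : {set 'S_m}) (psi : 'S_m -> K) : {set {ffun 'I_m -> 'I_N}} :=
  [set j : {ffun 'I_m -> 'I_N} | [forall s in U, lexle (fun k => nat_of_ord (j k))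
                                 (fun k => nat_of_ord (idx_act s j k))]
        && [forall s in U, (idx_act s j == j) ==> (psi s == 1)]].

Definition gfun m N (U : {set 'S_m}) (psi : 'S_m -> K) : (mpoly.mpoly N K) :=
  \sum_(j in Jset N U psi) \prod_(k < m) 'X_(j k).

Definition psum N (s : nat) : (mpoly.mpoly N K) := \sum_(i < N) 'X_i ^+ s.

Definition ncycles m (s : nat) (sigma : 'S_m) : nat :=
  #|[set c in porbits sigma | #|c| == s]|.

Definition cycle_index m N (U : {set 'S_m}) (psi : 'S_m -> K) : (mpoly.mpoly N K) :=
  (#|U|%:R)^-1 *:
    \sum_(sigma in U) psi sigma *:
       \prod_(1 <= s < m.+1) psum N s ^+ ncycles s sigma.

End GenFun.

From HB Require Import structures.
From mathcomp Require Import all_boot all_order all_algebra all_fingroup.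
From mathcomp Require Import finmap generic_quotient ring_quotient mpoly monalg.
Set Implicit Arguments. Unset Strict Implicit. Unset Printing Implicit Defensive.
Import Order.TTheory GRing.Theory.
Local Open Scope ring_scope.
Local Open Scope quotient_scope.

(* The isomorphism of (i) comes from universal properties. For fixed y, the   *)
(* map z |-> y lam ... lam z is multilinear and theta-equivariant, because    *)
(* lam (1, t) = theta t, so it factors through [theta]^r(E); the result is    *)
(* multilinear and chi-equivariant in y, so it factors through [chi]^d(E),    *)
(* and the bilinear map obtained factors through the tensor product. The      *)
(* inverse arises in the same way from x |-> (x_1 chi ... chi x_d) (x)        *)
(* (x_(d+1) theta ... theta x_(d+r)), which is lam-equivariant because        *)
(* lam (s, t) = chi s * theta t. Both composites and the naturality square    *)
(* of (ii) are linear, so it suffices to check them on generators.            *)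
(*   For (iii), exchanging the sums in Z(psi) gives                           *)
(* |U|^-1 sum_j (sum_(s in U_j) psi s) x_j: the monomials x_j with j fixed by *)
(* s are those constant on the cycles of s, and they add up to                *)
(* p_1^c_1(s) ... p_m^c_m(s). The character sum over the stabilizer U_j is    *)
(* |U_j| or 0 according as psi is trivial on U_j or not, so by the            *)
(* orbit-stabilizer theorem every orbit on which psi is trivial on            *)
(* stabilizers contributes the monomial of its lexicographically least        *)
(* element once: Z(psi) = g(psi). Finally a concatenation (a, b) lies in      *)
(* J(N^(d+r), chi (x) theta) iff a lies in J(N^d, chi) and b in J(N^r, theta),*)
(* because concatenations are compared lexicographically block by block and   *)
(* the stabilizer of (a, b) in W x V is W_a x V_b; hence                      *)
(* g(chi (x) theta) = g(chi) g(theta).                                        *)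

(** * Linear maps out of quotients and free modules *)

Section LinearPred.
Variables (K : fieldType) (U V : lmodType K) (f : U -> V).
Hypothesis f_lin : linear f.
HB.instance Definition _ := GRing.isLinear.Build K U V *:%R f f_lin.

Lemma linB : {morph f : x y / x - y}. Proof. exact: linearB. Qed.
Lemma linZ a : {morph f : x / a *: x}. Proof. exact: linearZ. Qed.
Lemma lin_sum I (s : seq I) (P : pred I) (F : I -> U) :
  f (\sum_(i <- s | P i) F i) = \sum_(i <- s | P i) f (F i).
Proof. exact: linear_sum. Qed.
End LinearPred.

Lemma linear_comp (K : fieldType) (U V W : lmodType K) (f : V -> W) (g : U -> V) :
  linear f -> linear g -> linear (f \o g).
Proof. by move=> f_lin g_lin a x y /=; rewrite g_lin f_lin. Qed.

Lemma linear_comb (K : fieldType) (U V : lmodType K) (f g : U -> V) (c : K) :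
  linear f -> linear g -> linear (fun x => c *: f x + g x).
Proof.
move=> f_lin g_lin a x y; rewrite f_lin g_lin !scalerDr !scalerA mulrC.
by rewrite addrACA.
Qed.

Section QuotientUniversal.
Variables (K : fieldType) (V : lmodType K) (S : V -> Prop).
Local Notation Q := (Quot S).

Lemma piZ a x : \pi_Q (a *: x) = a *: \pi_Q x.
Proof. by rewrite pi_scale. Qed.

Lemma piD x y : \pi_Q (x + y) = \pi_Q x + \pi_Q y.
Proof. exact: raddfD. Qed.

Lemma piB x y : \pi_Q (x - y) = \pi_Q x - \pi_Q y.
Proof. exact: raddfB. Qed.

Lemma pi_linear : linear \pi_Q.
Proof. by move=> a x y; rewrite piD piZ. Qed.

Lemma pi_rel x : S x -> \pi_Q x = 0.
Proof. by move=> Sx; apply/eqP; rewrite -(raddf0 \pi_Q) -Quotient.idealrBE subr0 span_gen. Qed.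

Lemma span_rel_eq0 (M : lmodType K) (f : V -> M) : linear f ->
  (forall v, S v -> f v = 0) -> forall v, v \in span_pred S -> f v = 0.
Proof.
move=> f_lin fS v /span_predP [s [Ss ->]]; rewrite (lin_sum f_lin) big1_seq // => p ps.
by rewrite (linZ f_lin) fS ?scaler0 //; apply: Ss.
Qed.

Definition qlift (M : lmodType K) (f : V -> M) (q : Q) : M := f (repr q).

Section Lift.
Variables (M : lmodType K) (f : V -> M).
Hypotheses (f_lin : linear f) (fS : forall v, S v -> f v = 0).

Lemma qlift_pi v : qlift f (\pi_Q v) = f v.
Proof.
apply/eqP; rewrite -subr_eq0 -(linB f_lin); apply/eqP/(span_rel_eq0 f_lin fS).
by rewrite Quotient.idealrBE reprK.
Qed.

Lemma qlift_linear : linear (qlift f).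
Proof.
by move=> a x y; rewrite -[x]reprK -[y]reprK -pi_linear !qlift_pi f_lin.
Qed.
End Lift.

Lemma quot_ext (M : Type) (g1 g2 : Q -> M) :
  (forall v, g1 (\pi_Q v) = g2 (\pi_Q v)) -> g1 =1 g2.
Proof. by move=> eq_g q; rewrite -[q]reprK eq_g. Qed.
End QuotientUniversal.

Section FreeModule.
Variables (K : fieldType) (X : choiceType) (M : lmodType K).
Local Notation Free := (@malg X K).

Definition flift (h : X -> M) (g : Free) : M := \sum_(k <- msupp g) mcoeff k g *: h k.

Variable h : X -> M.

Lemma fliftEw (g : Free) (D : {fset X}) :
  (msupp g `<=` D)%fset -> flift h g = \sum_(k <- D) mcoeff k g *: h k.
Proof.
move=> gD; rewrite /flift (big_fset_incl _ gD) // => k _ kNg.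
by rewrite mcoeff_outdom // scale0r.
Qed.

Lemma flift_linear : linear (flift h).
Proof.
move=> a x y; set D := (msupp x `|` msupp y)%fset.
have xyD : (msupp (a *: x + y) `<=` D)%fset.
  exact: fsubset_trans (msuppD_le _ _) (fsetUSS (msuppZ_le _ _) (fsubset_refl _)).
rewrite (fliftEw xyD) (fliftEw (fsubsetUl _ _ : msupp x `<=` D)%fset).
rewrite (fliftEw (fsubsetUr _ _ : msupp y `<=` D)%fset) scaler_sumr -big_split.
by apply: eq_bigr => k _; rewrite mcoeffD mcoeffZ scalerDl scalerA.
Qed.

Lemma flift_basis x : flift h << x >> = h x.
Proof. by rewrite /flift msuppU oner_eq0 big_seq_fset1 mcoeffUU scale1r. Qed.

Lemma malgU_scale (k : X) (c : K) : << c *g k >> = c *: << k >>.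
Proof. by apply/malgP => k'; rewrite mcoeffZ !mcoeffU mulr_natr. Qed.

Lemma free_ext (g1 g2 : Free -> M) : linear g1 -> linear g2 ->
  (forall x, g1 << x >> = g2 << x >>) -> g1 =1 g2.
Proof.
move=> g1_lin g2_lin eq_g g; rewrite (monalgE g) (lin_sum g1_lin) (lin_sum g2_lin).
by apply: eq_bigr => k _; rewrite malgU_scale (linZ g1_lin) (linZ g2_lin) eq_g.
Qed.
End FreeModule.

Section FreeLift.
Variables (K : fieldType) (X Y : choiceType) (f : X -> Y).

Lemma free_liftE : @free_lift K X Y f =1 flift (fun x => << f x >>).
Proof. by move=> g; apply: eq_bigr => k _; rewrite malgU_scale. Qed.

Lemma pi_free_lift (S : @malg Y K -> Prop) (v : @malg X K) :
  \pi_(Quot S) (free_lift f v) = flift (fun x => \pi_(Quot S) << f x >>) v.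
Proof.
rewrite free_liftE; move: v; apply: free_ext.
- exact: linear_comp (@pi_linear _ _ S) (flift_linear _).
- exact: flift_linear.
- by move=> x; rewrite !flift_basis.
Qed.
End FreeLift.

(** * Tensor powers, semi-symmetric powers and tensor products *)

Section TensorPower.
Variables (K : fieldType) (E : lmodType K) (m : nat).
Implicit Types (x : {ffun 'I_m -> E}) (z : tpow E m).

Definition is_multilinear (M : lmodType K) (h : {ffun 'I_m -> E} -> M) :=
  forall x i a y y', h (upd x i (a *: y + y')) = a *: h (upd x i y) + h (upd x i y').

Lemma tens_multilinear : is_multilinear (@tens K E m).
Proof.
move=> x i a y y'; apply/eqP; rewrite -piZ -piD -subr_eq0 -piB; apply/eqP/pi_rel.
by exists x, i, a, y, y'; rewrite opprD addrA.
Qed.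

Lemma multilinear_comp (M M' : lmodType K) (g : M -> M') (h : {ffun 'I_m -> E} -> M) :
  linear g -> is_multilinear h -> is_multilinear (g \o h).
Proof. by move=> g_lin h_multi x i a y y' /=; rewrite h_multi g_lin. Qed.

Lemma tpow_ext (M : lmodType K) (g1 g2 : tpow E m -> M) : linear g1 -> linear g2 ->
  (forall x, g1 (tens x) = g2 (tens x)) -> g1 =1 g2.
Proof.
move=> g1_lin g2_lin eq_g; apply: quot_ext; apply: free_ext => //.
- exact: linear_comp g1_lin (@pi_linear _ _ _).
- exact: linear_comp g2_lin (@pi_linear _ _ _).
Qed.

Definition tlift (M : lmodType K) (h : {ffun 'I_m -> E} -> M) : tpow E m -> M :=
  qlift (flift h).

Section Lift.
Variables (M : lmodType K) (h : {ffun 'I_m -> E} -> M).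
Hypothesis h_multi : is_multilinear h.

Lemma flift_multilin_rel v : multilin_rel v -> flift h v = 0.
Proof.
have h_lin := flift_linear h.
move=> [x [i [a [y [y' ->]]]]]; rewrite !(linB h_lin) (linZ h_lin) !flift_basis h_multi.
by rewrite addrAC addrK subrr.
Qed.

Lemma tlift_linear : linear (tlift h).
Proof. exact: qlift_linear (flift_linear h) flift_multilin_rel. Qed.

Lemma tlift_tens x : tlift h (tens x) = h x.
Proof.
by rewrite /tlift qlift_pi ?flift_basis //; [exact: flift_linear | exact: flift_multilin_rel].
Qed.
End Lift.

Lemma tlift_comp (M M' : lmodType K) (g : M -> M') (h : {ffun 'I_m -> E} -> M) :
  linear g -> is_multilinear h -> g \o tlift h =1 tlift (g \o h).
Proof.
move=> g_lin h_multi; apply: tpow_ext => [||x].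
- exact: linear_comp g_lin (tlift_linear h_multi).
- exact: tlift_linear (multilinear_comp g_lin h_multi).
- by rewrite /= !tlift_tens //; apply: multilinear_comp.
Qed.

Lemma tpow_induced (F : lmodType K) (phi : {ffun 'I_m -> E} -> {ffun 'I_m -> F}) z :
  \pi_(tpow F m) (free_lift phi (repr z)) = tlift (fun x => tens (phi x)) z.
Proof. exact: pi_free_lift. Qed.

Lemma upd_perm_tuple (s : 'S_m) x i y :
  perm_tuple s (upd x i y) = upd (perm_tuple s x) (s i) y.
Proof.
by apply/ffunP => k; rewrite !ffunE (canF_eq (permKV s)).
Qed.

Lemma tens_perm_multilinear (s : 'S_m) : is_multilinear (fun x => tens (perm_tuple s x)).
Proof. by move=> x i a y y'; rewrite !upd_perm_tuple tens_multilinear. Qed.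

Lemma tactE (s : 'S_m) : tact s =1 tlift (fun x => tens (perm_tuple s x)).
Proof. exact: tpow_induced. Qed.

Lemma tact_linear (s : 'S_m) : linear (@tact K E m s).
Proof. by move=> a z z'; rewrite !tactE; exact: tlift_linear (tens_perm_multilinear s) a z z'. Qed.

Lemma tact_tens (s : 'S_m) x : tact s (tens x) = tens (perm_tuple s x).
Proof. by rewrite tactE tlift_tens //; apply: tens_perm_multilinear. Qed.
End TensorPower.

Section SemiSymmetricPower.
Variables (K : fieldType) (E : lmodType K) (m : nat) (U : {set 'S_m}) (psi : 'S_m -> K).
Local Notation SP := (ssp E U psi).
Implicit Types (x : {ffun 'I_m -> E}) (z : tpow E m).

Lemma sspe_multilinear : is_multilinear (@sspe K E m U psi).
Proof. by move=> x i a y y'; rewrite /sspe tens_multilinear piD piZ. Qed.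

Lemma ssp_ext (M : lmodType K) (g1 g2 : SP -> M) : linear g1 -> linear g2 ->
  (forall x, g1 (sspe U psi x) = g2 (sspe U psi x)) -> g1 =1 g2.
Proof.
move=> g1_lin g2_lin eq_g; apply: quot_ext; apply: tpow_ext => //.
- exact: linear_comp g1_lin (@pi_linear _ _ _).
- exact: linear_comp g2_lin (@pi_linear _ _ _).
Qed.

Lemma pi_tact s z : s \in U -> \pi_SP (tact s z) = (psi s)^-1 *: \pi_SP z.
Proof.
move=> sU; apply/eqP; rewrite eq_sym -subr_eq0 -piZ -piB; apply/eqP/pi_rel.
by exists s; split=> //; exists z.
Qed.

Lemma sspe_perm s x : s \in U -> sspe U psi (perm_tuple s x) = (psi s)^-1 *: sspe U psi x.
Proof. by move=> sU; rewrite /sspe -tact_tens pi_tact. Qed.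

Definition sslift (M : lmodType K) (h : {ffun 'I_m -> E} -> M) : SP -> M :=
  qlift (tlift h).

Section Lift.
Variables (M : lmodType K) (h : {ffun 'I_m -> E} -> M).
Hypotheses (h_multi : is_multilinear h)
  (h_perm : forall s x, s \in U -> h (perm_tuple s x) = (psi s)^-1 *: h x).

Lemma tlift_ssp_rel z : ssp_rel U psi z -> tlift h z = 0.
Proof.
have h_lin := tlift_linear h_multi.
move=> [s [sU [{}z ->]]]; rewrite (linB h_lin) (linZ h_lin).
suff -> : tlift h (tact s z) = (psi s)^-1 *: tlift h z by rewrite subrr.
move: z; apply: tpow_ext.
- exact: linear_comp h_lin (@tact_linear _ _ _ _).
- by move=> a z z'; rewrite h_lin scalerDr !scalerA mulrC.
- by move=> x; rewrite tact_tens !tlift_tens // h_perm.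
Qed.

Lemma sslift_linear : linear (sslift h).
Proof. exact: qlift_linear (tlift_linear h_multi) tlift_ssp_rel. Qed.

Lemma sslift_sspe x : sslift h (sspe U psi x) = h x.
Proof. by rewrite /sslift /sspe (qlift_pi (tlift_linear h_multi) tlift_ssp_rel) tlift_tens. Qed.
End Lift.
End SemiSymmetricPower.

Section TensorProduct.
Variables (K : fieldType) (A B : lmodType K).
Local Notation TP := (tprod A B).

(* Plain [linear] in each argument rather than MathComp's [bilinear_for], whose
   scaling laws get in the way of rewriting with the [linear] lemmas above. *)
Definition is_bilinear (M : lmodType K) (h : A -> B -> M) :=
  (forall b, linear (h^~ b)) /\ (forall a, linear (h a)).

Lemma tpe_is_bilinear : is_bilinear (@tpe K A B).
Proof.
split=> [b c a a'|a c b b']; apply/eqP; rewrite /tpe -piZ -piD -subr_eq0 -piB;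
  apply/eqP/pi_rel; rewrite opprD addrA.
- by left; exists a, a', b, c.
- by right; exists a, b, b', c.
Qed.

Lemma tprod_ext (M : lmodType K) (g1 g2 : TP -> M) : linear g1 -> linear g2 ->
  (forall a b, g1 (tpe a b) = g2 (tpe a b)) -> g1 =1 g2.
Proof.
move=> g1_lin g2_lin eq_g; apply: quot_ext; apply: free_ext => [||[a b]].
- exact: linear_comp g1_lin (@pi_linear _ _ _).
- exact: linear_comp g2_lin (@pi_linear _ _ _).
- exact: eq_g.
Qed.

Definition plift (M : lmodType K) (h : A -> B -> M) : TP -> M :=
  qlift (flift (fun p : A * B => h p.1 p.2)).

Section Lift.
Variables (M : lmodType K) (h : A -> B -> M).
Hypothesis h_bilin : is_bilinear h.

Lemma flift_bilin_rel v : bilin_rel v -> flift (fun p : A * B => h p.1 p.2) v = 0.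
Proof.
have h_lin := flift_linear (fun p : A * B => h p.1 p.2).
case: h_bilin => h_linl h_linr.
by case=> [[a [a' [b [c ->]]]]|[a [b [b' [c ->]]]]];
  rewrite !(linB h_lin) (linZ h_lin) !flift_basis /= ?h_linl ?h_linr addrAC addrK subrr.
Qed.

Lemma plift_linear : linear (plift h).
Proof. exact: qlift_linear (flift_linear _) flift_bilin_rel. Qed.

Lemma plift_tpe a b : plift h (tpe a b) = h a b.
Proof. by rewrite /plift /tpe (qlift_pi (flift_linear _) flift_bilin_rel) flift_basis. Qed.
End Lift.
End TensorProduct.

Section TensorProductOfPowers.
Variables (K : fieldType) (E : lmodType K) (m1 m2 : nat).
Variables (U1 : {set 'S_m1}) (psi1 : 'S_m1 -> K) (U2 : {set 'S_m2}) (psi2 : 'S_m2 -> K).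

Lemma tprod_ssp_ext (M : lmodType K) (g1 g2 : tprod (ssp E U1 psi1) (ssp E U2 psi2) -> M) :
  linear g1 -> linear g2 ->
  (forall x1 x2, g1 (tpe (sspe U1 psi1 x1) (sspe U2 psi2 x2))
               = g2 (tpe (sspe U1 psi1 x1) (sspe U2 psi2 x2))) ->
  g1 =1 g2.
Proof.
have [tpe_linl tpe_linr] := @tpe_is_bilinear K (ssp E U1 psi1) (ssp E U2 psi2).
move=> g1_lin g2_lin eq_g; apply: tprod_ext => // a b; move: a.
apply: ssp_ext => [||x1]; try exact: linear_comp (tpe_linl b).
move: b; apply: ssp_ext => [||x2]; try exact: linear_comp (tpe_linr _).
exact: eq_g.
Qed.
End TensorProductOfPowers.

(** * Functoriality *)

Definition map_ffun (aT : finType) (T T' : Type) (l : T -> T') (x : {ffun aT -> T}) :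
  {ffun aT -> T'} := [ffun i => l (x i)].

Lemma map_ffun_upd (T T' : Type) m (l : T -> T') (x : {ffun 'I_m -> T}) i y :
  map_ffun l (upd x i y) = upd (map_ffun l x) i (l y).
Proof. by apply/ffunP => k; rewrite !ffunE; case: eqP. Qed.

Lemma map_ffun_perm (T T' : Type) m (l : T -> T') (s : 'S_m) (x : {ffun 'I_m -> T}) :
  map_ffun l (perm_tuple s x) = perm_tuple s (map_ffun l x).
Proof. by apply/ffunP => k; rewrite !ffunE. Qed.

Section Functoriality.
Variables (K : fieldType) (E F : lmodType K) (l : E -> F).
Hypothesis l_lin : linear l.

Section Power.
Variable m : nat.

Lemma tens_map_multilinear : is_multilinear (fun x : {ffun 'I_m -> E} => tens (map_ffun l x)).
Proof. by move=> x i a y y'; rewrite !map_ffun_upd l_lin tens_multilinear. Qed.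

Lemma tpow_mapE : @tpow_map K E F m l =1 tlift (fun x => tens (map_ffun l x)).
Proof. exact: tpow_induced. Qed.

Variables (U : {set 'S_m}) (psi : 'S_m -> K).

Lemma sspe_map_multilinear :
  is_multilinear (fun x : {ffun 'I_m -> E} => sspe U psi (map_ffun l x)).
Proof. by move=> x i a y y'; rewrite !map_ffun_upd l_lin sspe_multilinear. Qed.

Lemma sspe_map_perm s (x : {ffun 'I_m -> E}) : s \in U ->
  sspe U psi (map_ffun l (perm_tuple s x)) = (psi s)^-1 *: sspe U psi (map_ffun l x).
Proof. by move=> sU; rewrite map_ffun_perm sspe_perm. Qed.

Lemma ssp_mapE : @ssp_map K E F m U psi l =1 sslift (fun x => sspe U psi (map_ffun l x)).
Proof.
move=> z; rewrite /ssp_map /sslift /qlift tpow_mapE.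
exact: (tlift_comp (@pi_linear _ _ (ssp_rel U psi)) tens_map_multilinear).
Qed.

Lemma ssp_map_linear : linear (@ssp_map K E F m U psi l).
Proof.
move=> a z z'; rewrite !ssp_mapE.
exact: sslift_linear sspe_map_multilinear sspe_map_perm a z z'.
Qed.

Lemma ssp_map_sspe x : ssp_map l (sspe U psi x) = sspe U psi (map_ffun l x).
Proof.
by rewrite ssp_mapE sslift_sspe //; [exact: sspe_map_multilinear | exact: sspe_map_perm].
Qed.
End Power.
End Functoriality.

Section TensorProductMap.
Variables (K : fieldType) (A A' B B' : lmodType K) (f : A -> A') (g : B -> B').
Hypotheses (f_lin : linear f) (g_lin : linear g).

Lemma tpe_map_is_bilinear : is_bilinear (fun a b => tpe (f a) (g b)).
Proof.
have [tpe_linl tpe_linr] := @tpe_is_bilinear K A' B'.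
by split=> [b|a] c x y /=; rewrite ?f_lin ?g_lin ?tpe_linl ?tpe_linr.
Qed.

Lemma tprod_mapE : tprod_map f g =1 plift (fun a b => tpe (f a) (g b)).
Proof. move=> z; exact: pi_free_lift. Qed.

Lemma tprod_map_linear : linear (tprod_map f g).
Proof. by move=> c z z'; rewrite !tprod_mapE; exact: plift_linear tpe_map_is_bilinear c z z'. Qed.

Lemma tprod_map_tpe a b : tprod_map f g (tpe a b) = tpe (f a) (g b).
Proof. by rewrite tprod_mapE plift_tpe //; exact: tpe_map_is_bilinear. Qed.
End TensorProductMap.

(** * The product isomorphism *)

Section Concat.
Variables (T : Type) (d r : nat).
Implicit Types (y : {ffun 'I_d -> T}) (z : {ffun 'I_r -> T}) (x : {ffun 'I_(d + r) -> T}).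

Definition tleft x : {ffun 'I_d -> T} := [ffun a => x (lshift r a)].
Definition tright x : {ffun 'I_r -> T} := [ffun b => x (rshift d b)].

Lemma lshift_or_rshift (k : 'I_(d + r)) :
  (exists a, k = lshift r a) \/ (exists b, k = rshift d b).
Proof. by rewrite -(splitK k); case: (split k) => a; [left | right]; exists a. Qed.

Lemma concat_tuple_lshift y z a : concat_tuple y z (lshift r a) = y a.
Proof. by rewrite ffunE (unsplitK (inl a : 'I_d + 'I_r)). Qed.

Lemma concat_tuple_rshift y z b : concat_tuple y z (rshift d b) = z b.
Proof. by rewrite ffunE (unsplitK (inr b : 'I_d + 'I_r)). Qed.

Lemma tleft_concat y z : tleft (concat_tuple y z) = y.
Proof. by apply/ffunP => a; rewrite ffunE concat_tuple_lshift. Qed.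

Lemma tright_concat y z : tright (concat_tuple y z) = z.
Proof. by apply/ffunP => b; rewrite ffunE concat_tuple_rshift. Qed.

Lemma concat_tupleK x : concat_tuple (tleft x) (tright x) = x.
Proof.
apply/ffunP => k; rewrite -(splitK k).
by case: (split k) => a /=; rewrite ?concat_tuple_lshift ?concat_tuple_rshift ffunE.
Qed.

Lemma concat_tuple_inj y z y' z' :
  concat_tuple y z = concat_tuple y' z' -> y = y' /\ z = z'.
Proof.
move=> eq_yz; split; [have := congr1 tleft eq_yz | have := congr1 tright eq_yz].
  by rewrite !tleft_concat.
by rewrite !tright_concat.
Qed.

Lemma upd_concat_lshift y z i e :
  upd (concat_tuple y z) (lshift r i) e = concat_tuple (upd y i e) z.
Proof.
apply/ffunP => k; rewrite -(splitK k); case: (split k) => a /=; rewrite ffunE.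
  by rewrite !concat_tuple_lshift ffunE eq_lshift.
by rewrite !concat_tuple_rshift eq_rlshift.
Qed.

Lemma upd_concat_rshift y z i e :
  upd (concat_tuple y z) (rshift d i) e = concat_tuple y (upd z i e).
Proof.
apply/ffunP => k; rewrite -(splitK k); case: (split k) => a /=; rewrite ffunE.
  by rewrite !concat_tuple_lshift eq_lrshift.
by rewrite !concat_tuple_rshift ffunE eq_rshift.
Qed.

Lemma pair_perm_lshift (s : 'S_d) (t : 'S_r) a : pair_perm s t (lshift r a) = lshift r (s a).
Proof. by rewrite permE /pair_fun (unsplitK (inl a : 'I_d + 'I_r)). Qed.

Lemma pair_perm_rshift (s : 'S_d) (t : 'S_r) b : pair_perm s t (rshift d b) = rshift d (t b).
Proof. by rewrite permE /pair_fun (unsplitK (inr b : 'I_d + 'I_r)). Qed.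

Lemma pair_permV (s : 'S_d) (t : 'S_r) : ((pair_perm s t)^-1 = pair_perm s^-1 t^-1)%g.
Proof.
apply/eqP; rewrite eq_invg_mul; apply/eqP/permP => k; rewrite permM perm1.
by rewrite !permE pair_funK.
Qed.

Lemma perm_tuple_concat (s : 'S_d) (t : 'S_r) y z :
  perm_tuple (pair_perm s t) (concat_tuple y z)
  = concat_tuple (perm_tuple s y) (perm_tuple t z).
Proof.
apply/ffunP => k; rewrite -(splitK k) ffunE pair_permV.
case: (split k) => a /=; rewrite ?pair_perm_lshift ?pair_perm_rshift.
  by rewrite !concat_tuple_lshift ffunE.
by rewrite !concat_tuple_rshift ffunE.
Qed.
End Concat.

Lemma map_ffun_concat (T T' : Type) d r (l : T -> T')
    (y : {ffun 'I_d -> T}) (z : {ffun 'I_r -> T}) :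
  map_ffun l (concat_tuple y z) = concat_tuple (map_ffun l y) (map_ffun l z).
Proof.
apply/ffunP => k; rewrite -(splitK k) ffunE.
by case: (split k) => a /=; rewrite ?concat_tuple_lshift ?concat_tuple_rshift ffunE.
Qed.

Lemma perm_tuple1 (T : Type) m (x : {ffun 'I_m -> T}) : perm_tuple 1%g x = x.
Proof. by apply/ffunP => k; rewrite ffunE invg1 perm1. Qed.

Section ProductMap.
Variables (K : fieldType) (d r : nat) (W : {group 'S_d}) (V : {group 'S_r}).
Variables (chi : 'S_d -> K) (theta : 'S_r -> K) (lam : 'S_(d + r) -> K).
Hypotheses (chi1 : chi 1%g = 1) (theta1 : theta 1%g = 1)
  (lamE : forall s t, s \in W -> t \in V -> lam (pair_perm s t) = chi s * theta t).
Local Notation P := (prod_perm_set W V).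

Lemma pair_perm_in s t : s \in W -> t \in V -> pair_perm s t \in P.
Proof. by move=> sW tV; apply/imset2P; exists s t. Qed.

Section Space.
Variable E : lmodType K.
Implicit Types (y : {ffun 'I_d -> E}) (z : {ffun 'I_r -> E}).

Lemma sspe_concat_perm s t y z : s \in W -> t \in V ->
  sspe P lam (concat_tuple (perm_tuple s y) (perm_tuple t z))
  = (chi s * theta t)^-1 *: sspe P lam (concat_tuple y z).
Proof. by move=> sW tV; rewrite -perm_tuple_concat sspe_perm ?pair_perm_in ?lamE. Qed.

Lemma sspe_concat_perm_l s y z : s \in W ->
  sspe P lam (concat_tuple (perm_tuple s y) z) = (chi s)^-1 *: sspe P lam (concat_tuple y z).
Proof.
by move=> sW; rewrite -{1}[z]perm_tuple1 sspe_concat_perm ?group1 ?theta1 ?mulr1.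
Qed.

Lemma sspe_concat_perm_r y t z : t \in V ->
  sspe P lam (concat_tuple y (perm_tuple t z)) = (theta t)^-1 *: sspe P lam (concat_tuple y z).
Proof.
by move=> tV; rewrite -{1}[y]perm_tuple1 sspe_concat_perm ?group1 ?chi1 ?mul1r.
Qed.

Definition ssp_concat_r y : ssp E V theta -> ssp E P lam :=
  sslift (fun z => sspe P lam (concat_tuple y z)).

Lemma sspe_concat_multilinear_r y :
  is_multilinear (fun z : {ffun 'I_r -> E} => sspe P lam (concat_tuple y z)).
Proof. by move=> z i a e e'; rewrite -!upd_concat_rshift sspe_multilinear. Qed.

Lemma ssp_concat_r_linear y : linear (ssp_concat_r y).
Proof. exact: sslift_linear (sspe_concat_multilinear_r y) (sspe_concat_perm_r y). Qed.

Lemma ssp_concat_r_sspe y z : ssp_concat_r y (sspe V theta z) = sspe P lam (concat_tuple y z).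
Proof. exact: sslift_sspe (sspe_concat_multilinear_r y) (sspe_concat_perm_r y) z. Qed.

Lemma ssp_concat_r_multilinear b : is_multilinear (fun y => ssp_concat_r y b).
Proof.
move=> y i a e e'; move: b; apply: ssp_ext => [||z].
- exact: ssp_concat_r_linear.
- exact: linear_comb (ssp_concat_r_linear _) (ssp_concat_r_linear _).
- by rewrite !ssp_concat_r_sspe -!upd_concat_lshift sspe_multilinear.
Qed.

Lemma ssp_concat_r_perm b s y : s \in W ->
  ssp_concat_r (perm_tuple s y) b = (chi s)^-1 *: ssp_concat_r y b.
Proof.
move=> sW; move: b; apply: ssp_ext => [||z].
- exact: ssp_concat_r_linear.
- by move=> c b b'; rewrite ssp_concat_r_linear scalerDr !scalerA mulrC.
- by rewrite !ssp_concat_r_sspe sspe_concat_perm_l.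
Qed.

Definition ssp_concat (a : ssp E W chi) (b : ssp E V theta) : ssp E P lam :=
  sslift (fun y => ssp_concat_r y b) a.

Lemma ssp_concat_sspe_l y b : ssp_concat (sspe W chi y) b = ssp_concat_r y b.
Proof. exact: sslift_sspe (ssp_concat_r_multilinear b) (ssp_concat_r_perm b) y. Qed.

Lemma ssp_concat_is_bilinear : is_bilinear ssp_concat.
Proof.
have linl b : linear (ssp_concat^~ b).
  exact: sslift_linear (ssp_concat_r_multilinear b) (ssp_concat_r_perm b).
split=> // a c b b'; move: a; apply: ssp_ext => [||y].
- exact: linl.
- exact: linear_comb (linl _) (linl _).
- by rewrite !ssp_concat_sspe_l ssp_concat_r_linear.
Qed.

Definition ssp_prod : tprod (ssp E W chi) (ssp E V theta) -> ssp E P lam :=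
  plift ssp_concat.

Lemma ssp_prod_linear : linear ssp_prod.
Proof. exact: plift_linear ssp_concat_is_bilinear. Qed.

Lemma ssp_prod_sspe y z :
  ssp_prod (tpe (sspe W chi y) (sspe V theta z)) = sspe P lam (concat_tuple y z).
Proof.
rewrite /ssp_prod plift_tpe ?ssp_concat_sspe_l ?ssp_concat_r_sspe //.
exact: ssp_concat_is_bilinear.
Qed.

Definition tpe_split (x : {ffun 'I_(d + r) -> E}) : tprod (ssp E W chi) (ssp E V theta) :=
  tpe (sspe W chi (tleft x)) (sspe V theta (tright x)).

Lemma tpe_split_concat y z : tpe_split (concat_tuple y z) = tpe (sspe W chi y) (sspe V theta z).
Proof. by rewrite /tpe_split tleft_concat tright_concat. Qed.

Lemma tpe_split_multilinear : is_multilinear tpe_split.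
Proof.
have [tpe_linl tpe_linr] := @tpe_is_bilinear K (ssp E W chi) (ssp E V theta).
move=> x k a e e'; rewrite -(concat_tupleK x).
have [[i ->]|[i ->]] := lshift_or_rshift k.
  by rewrite !upd_concat_lshift !tpe_split_concat sspe_multilinear tpe_linl.
by rewrite !upd_concat_rshift !tpe_split_concat sspe_multilinear tpe_linr.
Qed.

Lemma tpe_split_perm u x : u \in P -> tpe_split (perm_tuple u x) = (lam u)^-1 *: tpe_split x.
Proof.
have [tpe_linl tpe_linr] := @tpe_is_bilinear K (ssp E W chi) (ssp E V theta).
case/imset2P=> s t sW tV ->; rewrite -(concat_tupleK x) perm_tuple_concat !tpe_split_concat.
by rewrite !sspe_perm // (linZ (tpe_linl _)) (linZ (tpe_linr _)) scalerA (lamE sW tV) invfM.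
Qed.

Definition ssp_split : ssp E P lam -> tprod (ssp E W chi) (ssp E V theta) :=
  sslift tpe_split.

Lemma ssp_split_linear : linear ssp_split.
Proof. exact: sslift_linear tpe_split_multilinear tpe_split_perm. Qed.

Lemma ssp_split_sspe x : ssp_split (sspe P lam x) = tpe_split x.
Proof. exact: sslift_sspe tpe_split_multilinear tpe_split_perm x. Qed.

Lemma ssp_prodK : cancel ssp_prod ssp_split.
Proof.
apply: (tprod_ssp_ext (g1 := fun u => ssp_split (ssp_prod u)) (g2 := id)) => [||y z].
- exact: linear_comp ssp_split_linear ssp_prod_linear.
- by [].
- by rewrite ssp_prod_sspe ssp_split_sspe tpe_split_concat.
Qed.

Lemma ssp_prodKV : cancel ssp_split ssp_prod.
Proof.
apply: (ssp_ext (g1 := fun u => ssp_prod (ssp_split u)) (g2 := id)) => [||x].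
- exact: linear_comp ssp_prod_linear ssp_split_linear.
- by [].
- by rewrite ssp_split_sspe ssp_prod_sspe concat_tupleK.
Qed.
End Space.

Lemma ssp_prod_natural (E F : lmodType K) (l : E -> F) : linear l ->
  forall u, ssp_prod (tprod_map (ssp_map l) (ssp_map l) u) = ssp_map l (ssp_prod u).
Proof.
move=> l_lin; have lW := @ssp_map_linear K E F l l_lin d W chi.
have lV := @ssp_map_linear K E F l l_lin r V theta.
have lP := @ssp_map_linear K E F l l_lin (d + r) P lam.
apply: (tprod_ssp_ext (g1 := fun u => ssp_prod (tprod_map (ssp_map l) (ssp_map l) u))
                      (g2 := fun u => ssp_map l (ssp_prod u))) => [||y z].
- by move=> c u v; rewrite tprod_map_linear // ssp_prod_linear.
- by move=> c u v; rewrite ssp_prod_linear lP.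
- by rewrite tprod_map_tpe // !ssp_map_sspe // !ssp_prod_sspe ssp_map_sspe // map_ffun_concat.
Qed.
End ProductMap.

(** * Lexicographic order on index tuples *)

Lemma enum_ord_add d r :
  enum 'I_(d + r) = [seq lshift r i | i <- enum 'I_d] ++ [seq rshift d i | i <- enum 'I_r].
Proof.
apply: (inj_map val_inj); rewrite val_enum_ord map_cat.
rewrite -(map_comp val (lshift r)) -(map_comp val (@rshift d r)).
rewrite (@eq_map _ _ (val \o lshift r) val) // val_enum_ord.
rewrite (@eq_map _ _ (val \o @rshift d r) (addn d \o val)) // map_comp val_enum_ord.
by rewrite -iotaDl addn0 -iotaD.
Qed.

Lemma lexi_cat disp (T : orderType disp) (s1 s2 t1 t2 : seqlexi T) :
  size s1 = size s2 ->
  (s1 ++ t1 <= s2 ++ t2 :> seqlexi T)%O = (s1 < s2)%O || (s1 == s2) && (t1 <= t2)%O.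
Proof.
elim: s1 s2 => [|x1 s1 IH] [|x2 s2] //= [/IH IHs].
by rewrite lexi_cons ltxi_cons eqseq_cons IHs; case: (ltgtP x1 x2).
Qed.

Definition lexkey m (f : 'I_m -> nat) : m.-tuplelexi nat := [tuple f i | i < m].

Lemma tnth_lexkey m (f : 'I_m -> nat) i : tnth (lexkey f) i = f i.
Proof. exact: tnth_mktuple. Qed.

Lemma lexleE m (f g : 'I_m -> nat) : lexle f g = (lexkey f <= lexkey g)%O.
Proof.
rewrite le_eqVlt; apply/forallP/orP => [le_fg|].
  have [k0 neq_k0|eq_fg] := pickP (fun k => f k != g k); last first.
    left; apply/eqP/eq_from_tnth => i; rewrite !tnth_lexkey.
    exact/eqP/negbFE/eq_fg.
  have [k neq_k min_k] := @arg_minnP _ k0 (fun k => f k != g k) val neq_k0.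
  have eq_before (i : 'I_m) : (i < k)%N -> f i = g i.
    by move=> lt_ik; apply/eqP; apply: contraTT lt_ik => /min_k; rewrite -leqNgt.
  right; apply/ltxi_tuplePlt; exists k => [i lt_ik|]; rewrite !tnth_lexkey.
    exact: eq_before.
  rewrite ltEnat; move: (le_fg k); rewrite neq_k andbT => /implyP; apply.
  by apply/forallP => i; apply/implyP => /eq_before ->.
case=> [/eqP eq_key | /ltxi_tuplePlt [k eq_before lt_k]] k'.
  have := congr1 (fun t => tnth t k') eq_key; rewrite /= !tnth_lexkey => ->.
  by rewrite eqxx andbF.
rewrite !tnth_lexkey in lt_k; apply/implyP => /andP [/forallP eq_pre neq_k'].
case: (ltngtP k' k) => [lt_k'k|lt_kk'|/val_inj eq_k'k].
- by have := eq_before k' lt_k'k; rewrite !tnth_lexkey => /eqP; rewrite (negbTE neq_k').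
- by move: (eq_pre k); rewrite lt_kk' => /eqP eq_k; rewrite eq_k ltxx in lt_k.
- by rewrite eq_k'k; exact: lt_k.
Qed.

(** * Cycle index and generating function *)

Section TupleAction.
Variables (T : finType) (m : nat).

Definition tuple_act (x : {ffun 'I_m -> T}) (s : 'S_m) := perm_tuple s x.

Lemma tuple_act1 : tuple_act^~ 1%g =1 id.
Proof. exact: perm_tuple1. Qed.

Lemma perm_tupleM (s t : 'S_m) (x : {ffun 'I_m -> T}) :
  perm_tuple (s * t) x = perm_tuple t (perm_tuple s x).
Proof. by apply/ffunP => k; rewrite !ffunE invMg permM. Qed.

Lemma tuple_actM x : act_morph tuple_act x.
Proof. by move=> s t; apply: perm_tupleM. Qed.

Lemma perm_tupleK (s : 'S_m) : cancel (@perm_tuple T m s) (perm_tuple s^-1).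
Proof. by move=> x; apply/ffunP => k; rewrite !ffunE invgK permK. Qed.

Canonical tuple_perm_act := TotalAction tuple_act1 tuple_actM.
End TupleAction.

Definition monomial_of (K : fieldType) m N (j : {ffun 'I_m -> 'I_N}) : mpoly.mpoly N K :=
  \prod_(k < m) 'X_(j k).

Lemma monomial_of_perm (K : fieldType) m N (s : 'S_m) (j : {ffun 'I_m -> 'I_N}) :
  monomial_of K (perm_tuple s j) = monomial_of K j.
Proof.
rewrite /monomial_of (reindex_inj (@perm_inj _ s)) /=.
by apply: eq_bigr => k _; rewrite ffunE permK.
Qed.

Section FixedTuples.
Variables (K : fieldType) (m N : nat) (s : 'S_m).
Local Notation T := {ffun 'I_m -> 'I_N}.
Local Notation cycles := {c in porbits s}.

Lemma perm_tuple_fixedP (j : T) : reflect (forall k, j (s k) = j k) (perm_tuple s j == j).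
Proof.
apply: (iffP eqP) => [fix_j k|fix_j]; first by rewrite -{1}fix_j ffunE permK.
by apply/ffunP => k; rewrite ffunE -{2}(permKV s k) fix_j.
Qed.

Lemma fixed_tuple_porbit (j : T) k k' :
  perm_tuple s j == j -> k' \in porbit s k -> j k' = j k.
Proof.
move=> /perm_tuple_fixedP fix_j /porbitP [i ->]; elim: i => [|i IHi].
  by rewrite expg0 perm1.
by rewrite expgSr permM fix_j.
Qed.

Lemma porbit_in_porbits k : porbit s k \in porbits s.
Proof. exact: imset_f. Qed.

Definition cycle_of (k : 'I_m) : cycles := Sub (porbit s k) (porbit_in_porbits k).

Lemma cycle_nonempty (c : cycles) : exists k, k \in val c.
Proof. by case: c => c /= /imsetP [k _ ->]; exists k; apply: porbit_id. Qed.

Definition cycle_rep (c : cycles) : 'I_m := xchoose (cycle_nonempty c).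

Lemma cycle_rep_in (c : cycles) : cycle_rep c \in val c.
Proof. exact: xchooseP. Qed.

Lemma porbit_cycle_rep (c : cycles) : porbit s (cycle_rep c) = val c.
Proof.
have rep_c := cycle_rep_in c; have /imsetP [k _ def_c] := valP c.
by rewrite def_c in rep_c *; apply/eqP; rewrite eq_porbit_mem.
Qed.

Lemma cycle_ofK : cancel cycle_rep cycle_of.
Proof. by move=> c; apply: val_inj; apply: porbit_cycle_rep. Qed.

Definition tuple_of_coloring (f : {ffun cycles -> 'I_N}) : T := [ffun k => f (cycle_of k)].
Definition coloring_of_tuple (j : T) : {ffun cycles -> 'I_N} := [ffun c => j (cycle_rep c)].

Lemma tuple_of_coloringK : cancel tuple_of_coloring coloring_of_tuple.
Proof. by move=> f; apply/ffunP => c; rewrite !ffunE cycle_ofK. Qed.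

Lemma coloring_of_tupleK (j : T) :
  (tuple_of_coloring (coloring_of_tuple j) == j) = (perm_tuple s j == j).
Proof.
apply/eqP/idP => [<-|fix_j].
  apply/perm_tuple_fixedP => k; rewrite !ffunE.
  by congr (j (cycle_rep _)); apply: val_inj; rewrite /= -(porbit_perm s 1 k) expg1.
apply/ffunP => k; rewrite !ffunE; apply: fixed_tuple_porbit fix_j _.
exact: cycle_rep_in (cycle_of k).
Qed.

Lemma card_porbit_fiber (c : {set 'I_m}) :
  c \in porbits s -> #|[pred k | porbit s k == c]| = #|c|.
Proof. by case/imsetP=> x _ ->; apply: eq_card => k; rewrite inE /= eq_porbit_mem. Qed.

Lemma sum_fixed_monomials :
  \sum_(j : T | perm_tuple s j == j) monomial_of K j = \prod_(c in porbits s) psum K N #|c|.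
Proof.
rewrite [RHS]big_sub /psum [RHS]bigA_distr_bigA /=.
rewrite (reindex_onto coloring_of_tuple tuple_of_coloring) => [|f _]; last first.
  by rewrite tuple_of_coloringK.
apply: eq_big => [j|j fix_j]; first by rewrite coloring_of_tupleK.
rewrite /monomial_of (partition_big (porbit s) (mem (porbits s))) => [|k _]; last first.
  exact: porbit_in_porbits.
rewrite big_sub; apply: eq_bigr => c _; rewrite ffunE.
rewrite (eq_bigr (fun _ => 'X_(j (cycle_rep c)))) => [|k /eqP def_c]; last first.
  by rewrite (fixed_tuple_porbit fix_j (_ : cycle_rep c \in porbit s k)) // def_c cycle_rep_in.
by rewrite prodr_const card_porbit_fiber // (valP c).
Qed.

Lemma prod_porbits_psum :
  \prod_(c in porbits s) psum K N #|c| = \prod_(1 <= i < m.+1) psum K N i ^+ ncycles i s.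
Proof.
have card_le (c : {set 'I_m}) : (#|c| < m.+1)%N.
  by rewrite ltnS -[X in (_ <= X)%N]card_ord; apply: max_card.
rewrite (partition_big (fun c : {set 'I_m} => inord #|c| : 'I_m.+1) xpredT) //=.
transitivity (\prod_(i < m.+1) \prod_(c in porbits s | #|c| == i) psum K N #|c|).
  apply: eq_bigr => i _; apply: eq_bigl => c.
  by rewrite -val_eqE /= inordK.
rewrite -(big_mkord xpredT (fun i => \prod_(c in porbits s | #|c| == i) psum K N #|c|)).
rewrite big_ltn // big1 ?mul1r => [|c /andP [/imsetP [k _ ->]]]; last first.
  by rewrite (negbTE (card_porbit_neq0 _ _)).
apply: eq_big_nat => i /andP [i_gt0 i_le].
rewrite (eq_bigr (fun _ => psum K N i)) => [|c /andP [_ /eqP -> //]].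
by rewrite prodr_const; congr (_ ^+ _); apply: eq_card => c; rewrite !inE.
Qed.
End FixedTuples.

Section OrbitSums.
Variables (K : fieldType) (M : lmodType K) (aT : finGroupType) (G : {group aT}).
Variables (rT : finType) (to : {action aT &-> rT}).
Hypothesis char0 : [pchar K] =i pred0.
Local Notation orb x := (orbit to G x).

Lemma natr_card_orbit_neq0 x : (#|orb x|%:R : K) != 0.
Proof.
by rewrite ((pcharf0P K).1 char0) -lt0n card_gt0; apply/set0Pn; exists x; apply: orbit_refl.
Qed.

Lemma sum_orbit_avg (F : rT -> M) :
  \sum_x (#|orb x|%:R)^-1 *: \sum_(y in orb x) F y = \sum_x F x.
Proof.
under eq_bigr do rewrite scaler_sumr big_mkcond /=.
rewrite exchange_big /=; apply: eq_bigr => y _; rewrite -big_mkcond /=.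
rewrite (eq_bigl (mem (orb y))) => [|x]; last by rewrite /= orbit_sym.
rewrite (eq_bigr (fun _ => (#|orb y|%:R)^-1 *: F y)) => [|x /orbit_eqP -> //].
by rewrite sumr_const -scaler_nat scalerA mulfV ?scale1r ?natr_card_orbit_neq0.
Qed.

Lemma sum_orbit_transversal (F : rT -> M) (R : pred rT) :
  (forall x s, s \in G -> F (to x s) = F x) ->
  (forall x, exists2 y, y \in orb x & R y) ->
  (forall x y, R x -> R y -> y \in orb x -> x = y) ->
  \sum_x (#|orb x|%:R)^-1 *: F x = \sum_(x | R x) F x.
Proof.
move=> F_inv R_ex R_uniq; rewrite [RHS]big_mkcond -[RHS]sum_orbit_avg /=.
apply: eq_bigr => x _; congr (_ *: _); have [y xy Ry] := R_ex x.
rewrite (bigD1 y) //= Ry big1 ?addr0 => [|z /andP [xz neq_zy]]; last first.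
  case Rz: (R z) => //; case/eqP: neq_zy; apply/esym/R_uniq => //.
  by apply: orbit_trans xz _; rewrite orbit_sym.
by case/imsetP: xy => s sG ->; rewrite F_inv.
Qed.
End OrbitSums.

Section LinearCharacter.
Variables (K : fieldType) (m : nat) (U : {group 'S_m}) (psi : 'S_m -> K).
Hypothesis psi_char : lin_char U psi.

Lemma lin_char1 : psi 1%g = 1.
Proof.
have [psiM psi_neq0] := psi_char; have U1 := group1 U.
by apply: (mulfI (psi_neq0 _ U1)); rewrite -psiM // mulg1 mulr1.
Qed.

Lemma lin_charJ s t : s \in U -> t \in U -> psi (t ^ s)%g = psi t.
Proof.
have [psiM _] := psi_char; move=> sU tU.
rewrite conjgE !psiM ?groupM ?groupV // mulrCA -psiM ?groupV //.
by rewrite mulVg lin_char1 mulr1.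
Qed.

Lemma sum_lin_char (H : {group 'S_m}) : H \subset U ->
  \sum_(s in H) psi s = ([forall s in H, psi s == 1])%:R * #|H|%:R.
Proof.
have [psiM _] := psi_char; move=> sHU.
case: (boolP [forall s in H, psi s == 1]) => [/forall_inP psi1|].
  by rewrite mul1r (eq_bigr (fun _ => 1)) ?sumr_const // => s /psi1 /eqP.
case/forall_inPn=> t tH /negPf psit_neq1.
rewrite mul0r; set S := \sum_(s in H) _.
have : S = psi t * S.
  rewrite {1}/S (reindex_inj (mulgI t)) mulr_sumr /=.
  apply: eq_big => [s|s]; first by rewrite groupMl.
  by rewrite groupMl // => sH; rewrite psiM ?(subsetP sHU).
by move/eqP; rewrite -subr_eq0 -{1}[S]mul1r -mulrBl mulf_eq0 subr_eq0 eq_sym psit_neq1 => /eqP.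
Qed.
End LinearCharacter.

Section LexMinimal.
Variables (m N : nat) (U : {set 'S_m}).
Implicit Types j : {ffun 'I_m -> 'I_N}.

Definition index_key j := lexkey (fun k => val (j k)).

Lemma index_key_inj : injective index_key.
Proof.
move=> j j' eq_key; apply/ffunP => k; apply: val_inj.
by have := congr1 (fun t => tnth t k) eq_key; rewrite /= !tnth_lexkey.
Qed.

Definition lexmin j :=
  [forall s in U, lexle (fun k => val (j k)) (fun k => val (perm_tuple s j k))].

Lemma lexminP j : reflect {in U, forall s, index_key j <= index_key (perm_tuple s j)}%O (lexmin j).
Proof. by apply: (iffP forall_inP) => le_j s /le_j; rewrite lexleE. Qed.
End LexMinimal.

Section StabilizerTrivial.
Variables (K : fieldType) (m N : nat) (U : {set 'S_m}) (psi : 'S_m -> K).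
Implicit Types j : {ffun 'I_m -> 'I_N}.

Definition stab_trivial j := [forall s in U, (perm_tuple s j == j) ==> (psi s == 1)].

(* [idx_act] and [perm_tuple] coincide definitionally. *)
Lemma mem_Jset j : (j \in Jset N U psi) = lexmin U j && stab_trivial j.
Proof. by rewrite inE. Qed.
End StabilizerTrivial.

Section CycleIndex.
Variables (K : fieldType) (m N : nat) (U : {group 'S_m}) (psi : 'S_m -> K).
Hypotheses (char0 : [pchar K] =i pred0) (psi_char : lin_char U psi).
Local Notation T := {ffun 'I_m -> 'I_N}.
Local Notation to := (tuple_perm_act 'I_N m).
Local Notation lexmin := (@lexmin m N U).
Local Notation stab_trivial := (@stab_trivial K m N U psi).
Implicit Types j : T.

Lemma lexmin_exists j : exists2 j', j' \in orbit to U j & lexmin j'.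
Proof.
have [j' j_j' min_j'] := @arg_minP _ _ _ j (mem (orbit to U j)) (@index_key m N) (orbit_refl _ _ _).
exists j' => //; apply/lexminP => s sU; apply: min_j'.
by apply: orbit_trans (mem_orbit to j' sU) j_j'.
Qed.

Lemma lexmin_uniq j j' : lexmin j -> lexmin j' -> j' \in orbit to U j -> j = j'.
Proof.
move=> /lexminP min_j /lexminP min_j' /imsetP [s sU def_j']; subst j'.
apply: index_key_inj; apply: le_anti; rewrite min_j //=.
by move: (min_j' _ (groupVr sU)); rewrite /= /tuple_act perm_tupleK.
Qed.

Lemma stab_trivialE j : stab_trivial j = [forall s in 'C_U[j | to]%g, psi s == 1].
Proof.
apply: eq_forallb => s; rewrite in_setI; case: (s \in U) => //=.
by rewrite (sameP astab1P eqP).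
Qed.

Lemma stab_trivial_act j s : s \in U -> stab_trivial (perm_tuple s j) = stab_trivial j.
Proof.
suff triv_act j' s' : s' \in U -> stab_trivial j' -> stab_trivial (perm_tuple s' j').
  move=> sU; apply/idP/idP => [|/triv_act]; last exact.
  by move/(triv_act _ s^-1%g); rewrite perm_tupleK; apply; rewrite groupV.
move=> s'U /forall_inP triv_j'; apply/forall_inP => t tU; apply/implyP => /eqP fix_t.
have /implyP := triv_j' _ (groupJ tU (groupVr s'U)).
rewrite (lin_charJ psi_char (groupVr s'U) tU); apply.
by rewrite conjgE invgK !perm_tupleM fix_t perm_tupleK.
Qed.

Lemma sum_char_fixing j :
  \sum_(s in U | perm_tuple s j == j) psi s = (stab_trivial j)%:R * #|'C_U[j | to]%g|%:R.
Proof.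
rewrite stab_trivialE -(sum_lin_char psi_char) ?subsetIl //.
by apply: eq_bigl => s; rewrite in_setI (sameP astab1P eqP).
Qed.

Lemma gfun_cycle_index : gfun N U psi = cycle_index N U psi.
Proof.
rewrite /cycle_index; under eq_bigr do rewrite -prod_porbits_psum -sum_fixed_monomials.
under eq_bigr do rewrite scaler_sumr.
rewrite (exchange_big_dep xpredT) //=.
under eq_bigr do rewrite -scaler_suml sum_char_fixing.
rewrite scaler_sumr.
transitivity (\sum_j (#|orbit to U j|%:R)^-1 *: ((stab_trivial j)%:R *: monomial_of K j)).
  rewrite [RHS](sum_orbit_transversal char0 (R := lexmin)) => [|j s sU|j|j j'].
  - rewrite /gfun big_mkcond [RHS]big_mkcond; apply: eq_bigr => j _; rewrite mem_Jset.
    by case: (lexmin j); case: (stab_trivial j); rewrite ?scale1r ?scale0r.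
  - by rewrite stab_trivial_act // monomial_of_perm.
  - exact: lexmin_exists.
  - exact: lexmin_uniq.
apply: eq_bigr => j _; rewrite !scalerA; congr (_ *: _).
have stab_neq0 : (#|'C_U[j | to]%g|%:R : K) != 0.
  by rewrite ((pcharf0P K).1 char0) -lt0n card_gt0; apply/set0Pn; exists 1%g.
by rewrite -(card_orbit_stab to U j) natrM invfM mulrACA mulVf ?mulr1.
Qed.
End CycleIndex.

(** * Multiplicativity of the generating function *)

Section GfunProduct.
Variables (K : fieldType) (d r N : nat) (W : {group 'S_d}) (V : {group 'S_r}).
Variables (chi : 'S_d -> K) (theta : 'S_r -> K) (lam : 'S_(d + r) -> K).
Hypotheses (chi1 : chi 1%g = 1) (theta1 : theta 1%g = 1)
  (lamE : forall s t, s \in W -> t \in V -> lam (pair_perm s t) = chi s * theta t).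
Local Notation P := (prod_perm_set W V).
Implicit Types (a : {ffun 'I_d -> 'I_N}) (b : {ffun 'I_r -> 'I_N}).

Lemma index_key_concat a b :
  val (index_key (concat_tuple a b)) = val (index_key a) ++ val (index_key b).
Proof.
rewrite /= enum_ord_add map_cat -(map_comp _ (lshift r)) -(map_comp _ (@rshift d r)).
by congr (_ ++ _); apply: eq_map => i /=; rewrite ?concat_tuple_lshift ?concat_tuple_rshift.
Qed.

Lemma index_key_concat_le a a' b b' :
  (index_key (concat_tuple a b) <= index_key (concat_tuple a' b'))%O =
  (index_key a < index_key a')%O
  || (index_key a == index_key a') && (index_key b <= index_key b')%O.
Proof.
by rewrite -Order.le_val !index_key_concat lexi_cat ?size_tuple // lt_val Order.le_val val_eqE.
Qed.

Lemma lexmin_concat a b : lexmin P (concat_tuple a b) = lexmin W a && lexmin V b.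
Proof.
apply/lexminP/andP => [min_ab|[/lexminP min_a /lexminP min_b] u].
  split; apply/lexminP.
    move=> s sW; have := min_ab _ (pair_perm_in sW (group1 V)).
    by rewrite perm_tuple_concat perm_tuple1 index_key_concat_le lexx andbT le_eqVlt orbC.
  move=> t tV; have := min_ab _ (pair_perm_in (group1 W) tV).
  by rewrite perm_tuple_concat perm_tuple1 index_key_concat_le ltxx eqxx.
case/imset2P=> s t sW tV ->; rewrite perm_tuple_concat index_key_concat_le.
by move: (min_a s sW) (min_b t tV); rewrite le_eqVlt => /orP [->|->] ->; rewrite ?orbT.
Qed.

Lemma stab_trivial_concat a b :
  stab_trivial P lam (concat_tuple a b) = stab_trivial W chi a && stab_trivial V theta b.
Proof.
apply/forall_inP/andP => [triv_ab|[/forall_inP triv_a /forall_inP triv_b] u].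
  split; apply/forall_inP.
    move=> s sW; apply/implyP => /eqP fix_ab.
    have /implyP := triv_ab _ (pair_perm_in sW (group1 V)).
    by rewrite perm_tuple_concat perm_tuple1 fix_ab eqxx lamE ?group1 // theta1 mulr1; apply.
  move=> t tV; apply/implyP => /eqP fix_ab.
  have /implyP := triv_ab _ (pair_perm_in (group1 W) tV).
  by rewrite perm_tuple_concat perm_tuple1 fix_ab eqxx lamE ?group1 // chi1 mul1r; apply.
case/imset2P=> s t sW tV ->; rewrite perm_tuple_concat; apply/implyP.
move=> /eqP /concat_tuple_inj [fix_a fix_b]; rewrite lamE //.
move: (triv_a s sW) (triv_b t tV); rewrite fix_a fix_b !eqxx /= => /eqP -> /eqP ->.
by rewrite mulr1.
Qed.

Lemma mem_Jset_concat a b :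
  (concat_tuple a b \in Jset N P lam) = (a \in Jset N W chi) && (b \in Jset N V theta).
Proof.
by rewrite !mem_Jset lexmin_concat stab_trivial_concat andbACA.
Qed.

Lemma gfun_prod : gfun N P lam = gfun N W chi * gfun N V theta.
Proof.
rewrite /gfun [RHS]big_distrl /=; under [RHS]eq_bigr do rewrite big_distrr /=.
rewrite pair_big_dep /= (reindex (fun p => concat_tuple p.1 p.2)) /=; last first.
  exists (fun j => (tleft j, tright j)) => [[a b] _|j _] /=.
    by rewrite tleft_concat tright_concat.
  exact: concat_tupleK.
apply: eq_big => [[a b]|[a b] _] /=; first exact: mem_Jset_concat.
rewrite big_split_ord /=; congr (_ * _); apply: eq_bigr => i _.
  by rewrite concat_tuple_lshift.
by rewrite concat_tuple_rshift.
Qed.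
End GfunProduct.

Theorem proposition2p2p1 (K : fieldType) (d r : nat)
    (W : {group 'S_d}) (V : {group 'S_r})
    (chi : 'S_d -> K) (theta : 'S_r -> K) (lam : 'S_(d + r) -> K) :
  [pchar K] =i pred0 ->
  lin_char W chi -> lin_char V theta ->
  (* lam = chi (x) theta on W x V <= S_(d+r) *)
  (forall s t, s \in W -> t \in V -> lam (pair_perm s t) = chi s * theta t) ->
  (exists Pi : forall E : lmodType K,
      tprod (ssp E W chi) (ssp E V theta) -> ssp E (prod_perm_set W V) lam,
    (* (i) *)
    (forall E : lmodType K,
       linear (Pi E) /\ bijective (Pi E) /\
       forall (y : {ffun 'I_d -> E}) (z : {ffun 'I_r -> E}),
         Pi E (tpe (sspe W chi y) (sspe V theta z))
         = sspe (prod_perm_set W V) lam (concat_tuple y z)) /\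
    (* (ii) naturality on finite-dimensional spaces *)
    (forall (E F : vectType K) (l : {linear E -> F})
            (u : tprod (ssp E W chi) (ssp E V theta)),
       Pi F (tprod_map (ssp_map l) (ssp_map l) u)
       = ssp_map l (Pi E u))) /\
  (* (iii) *)
  (forall N : nat,
     gfun N (prod_perm_set W V) lam = cycle_index N W chi * cycle_index N V theta).
Proof.
move=> char0 chi_char theta_char lamE.
have chi1 := lin_char1 chi_char; have theta1 := lin_char1 theta_char.
split; last first.
  by move=> N; rewrite (gfun_prod _ chi1 theta1 lamE) !gfun_cycle_index.
exists (fun E => ssp_prod lam (E := E)); split=> [E|E F l].
  split; first by move=> a u v; rewrite (ssp_prod_linear chi1 theta1 lamE).
  split; first by exists (ssp_split chi theta (lam := lam) (E := E));
    [apply: ssp_prodK | apply: ssp_prodKV].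
  by move=> y z; rewrite (ssp_prod_sspe chi1 theta1 lamE).
by move=> u; rewrite (ssp_prod_natural chi1 theta1 lamE) //; apply: linearP.
Qed.
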